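(* Let $1\leq p<\infty$ and let $N\geq 2$ be an integer. Let $p_1,\dots,p_N$ be positive integers such that $2p_s<p_t$ for all $1\leq s<t\leq N$, let $l_1,\dots,l_N$ be arbitrary integers, and let $\lambda_1,\dots,\lambda_N$ be real numbers such that $1<|\lambda_s|<|\lambda_t|$ for all $1\leq s<t\leq N$. For $1\leq i\leq N$ define $f_i:\mathbb{Z}\to\mathbb{Z}$ by $f_i(n)=n+p_i$, and define the weight sequence $w^{(i)}=(w^{(i)}_n)_{n\in\mathbb{Z}}$ by $w^{(i)}_n=\lambda_i$ if $n>l_i$ and $w^{(i)}_n=1/\lambda_i$ if $n\leq l_i$. Let $T_i=T_{f_i,w^{(i)}}$ be the corresponding bilateral weighted pseudo-shift on $\ell^p(\mathbb{Z})$. Then each $T_i$ is invertible, $T_1,\dots,T_N$ are disjoint hypercyclic, and $T_1^{-1},\dots,T_N^{-1}$ are also disjoint hypercyclic.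
   Context: $(e_j)_{j\in\mathbb{Z}}$ is the canonical basis of $\ell^p(\mathbb{Z})$. Bilateral weighted pseudo-shift: given an invertible map $f:\mathbb{Z}\to\mathbb{Z}$ and a bounded nonzero weight sequence $w=(w_j)_{j\in\mathbb{Z}}$, $T_{f,w}\big(\sum_{j\in\mathbb{Z}}x_je_j\big)=\sum_{j\in\mathbb{Z}}w_{f(j)}x_{f(j)}e_j$. Operators $T_1,\dots,T_N$ ($N\geq 2$) on a separable Banach space $X$ are disjoint hypercyclic if there is $x\in X$ such that $\{(T_1^nx,\dots,T_N^nx):n\in\mathbb{N}\}$ is dense in $X^N$. *)

From Stdlib Require Import Reals ZArith Lra.
From Coquelicot Require Import Coquelicot.
Open Scope R_scope.

Definition zseq := Z -> R.

Definition abspow (a p : R) : R :=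
  if Req_EM_T a 0 then 0 else Rpower (Rabs a) p.

(* the bilateral sum over Z of a family, folded onto nat:
   term k = a_k + a_{-k-1} *)
Definition zfold (a : Z -> R) (k : nat) : R :=
  a (Z.of_nat k) + a (- Z.of_nat k - 1)%Z.

Definition in_lp (p : R) (x : zseq) : Prop :=
  ex_series (zfold (fun j => abspow (x j) p)).

Definition lp_norm (p : R) (x : zseq) : R :=
  abspow (Series (zfold (fun j => abspow (x j) p))) (/ p).

Definition zsub (x y : zseq) : zseq := fun j => x j - y j.

Definition pseudo_shift (f : Z -> Z) (w : Z -> R) (x : zseq) : zseq :=
  fun j => w (f j) * x (f j).

Definition bounded_op (p : R) (T : zseq -> zseq) : Prop :=
  (forall x, in_lp p x -> in_lp p (T x)) /\
  (forall a b x y, in_lp p x -> in_lp p y ->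
     T (fun j => a * x j + b * y j) = (fun j => a * T x j + b * T y j)) /\
  (exists C, forall x, in_lp p x -> lp_norm p (T x) <= C * lp_norm p x).

Definition inverse_op (p : R) (T S : zseq -> zseq) : Prop :=
  bounded_op p T /\ bounded_op p S /\
  (forall x, in_lp p x -> S (T x) = x) /\
  (forall x, in_lp p x -> T (S x) = x).

(* T_0, ..., T_{N-1} are disjoint hypercyclic on l^p(Z): some x in l^p
   has {(T_0^n x, ..., T_{N-1}^n x) : n in N} dense in (l^p)^N
   (product topology, i.e. the max of the coordinate norms). *)
Definition disjoint_hypercyclic (p : R) (N : nat) (T : nat -> zseq -> zseq)
  : Prop :=
  exists x, in_lp p x /\
    forall (y : nat -> zseq), (forall i, (i < N)%nat -> in_lp p (y i)) ->
    forall eps, 0 < eps ->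
    exists n : nat, forall i, (i < N)%nat ->
      lp_norm p (zsub (Nat.iter n (T i) x) (y i)) < eps.

Definition shift_map (q : Z) : Z -> Z := fun n => (n + q)%Z.
Definition step_weight (lam : R) (l : Z) : Z -> R :=
  fun n => if (l <? n)%Z then lam else / lam.

From Stdlib Require Import Reals ZArith Lra Lia List Cantor FunctionalExtensionality ClassicalEpsilon.
From Coquelicot Require Import Coquelicot.
Open Scope R_scope.

(* The inverse of the forward shift with weights [w] is the backward shift with weights [1/w],
   and the reflection [j |-> -j-1] conjugates it to a forward step-weighted shift of the same
   kind (threshold [q - 2 - l]); so both claims reduce to the disjoint hypercyclicity of
   forward step-weighted shifts [T_i].  For these a vector is built by hand, as in the proof of
   the disjoint hypercyclicity criterion: enumerate a dense sequence of finitely supported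
   targets [(u_m0, ..., u_m(N-1))], choose fast increasing times [n_m] and put
   [x = sum_m sum_i T_i^(-n_m) u_mi].  Then [T_k^(n_m) x - u_mk] consists of
   (a) the earlier stages, sent far to the left where the weights of [T_k^(n_m)] are tiny;
   (b) the terms [T_k^(n_m) T_i^(-n_m) u_mi], [i <> k], which are small because the weights of
       [T_k] grow more slowly than those of [T_i] ([|lam_k| < |lam_i|]) or, when [q_k > 2 q_i],
       are mostly evaluated below the threshold, where they are [1 / lam_k];
   (c) the later stages, made negligible by the choice of the later times.
   The error is estimated in l^1 and is at most 1 pointwise, hence it is small in l^p. *)

Fixpoint psum (a : nat -> R) (n : nat) : R :=
  match n with O => 0 | S n => psum a n + a n end.

Lemma sum_n_psum a n : sum_n a n = psum a (S n).
Proof.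
  induction n as [|n IH]; simpl.
  - rewrite sum_O. lra.
  - rewrite sum_Sn, IH. simpl. unfold plus; simpl. lra.
Qed.

Lemma psum_le a b n : (forall k, (k < n)%nat -> a k <= b k) -> psum a n <= psum b n.
Proof.
  intros H; induction n as [|n IH]; simpl; [lra|].
  pose proof (H n (Nat.lt_succ_diag_r n)). assert (psum a n <= psum b n) by (apply IH; auto). lra.
Qed.

Lemma psum_ext a b n : (forall k, (k < n)%nat -> a k = b k) -> psum a n = psum b n.
Proof. intros H; induction n as [|n IH]; simpl; auto. rewrite IH, H; auto. Qed.

Lemma psum_const c n : psum (fun _ => c) n = INR n * c.
Proof. induction n as [|n IH]; simpl psum; [simpl; lra|]. rewrite IH, S_INR. lra. Qed.

Lemma psum_ge0 a n : (forall k, 0 <= a k) -> 0 <= psum a n.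
Proof.
  intros H. pose proof (psum_le (fun _ => 0) a n (fun k _ => H k)). rewrite psum_const in H0. lra.
Qed.

Lemma psum_0 a n : (forall k, (k < n)%nat -> a k = 0) -> psum a n = 0.
Proof. intros H. rewrite (psum_ext a (fun _ => 0)) by auto. rewrite psum_const. lra. Qed.

Lemma psum_plus a b n : psum (fun k => a k + b k) n = psum a n + psum b n.
Proof. induction n; simpl; lra. Qed.

Lemma psum_minus a b n : psum (fun k => a k - b k) n = psum a n - psum b n.
Proof. induction n; simpl; lra. Qed.

Lemma psum_scal c a n : psum (fun k => c * a k) n = c * psum a n.
Proof. induction n; simpl; lra. Qed.

Lemma psum_add a n r : psum a (n + r) = psum a n + psum (fun k => a (n + k)%nat) r.
Proof.
  induction r as [|r IH]; simpl; [rewrite Nat.add_0_r; lra|].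
  rewrite Nat.add_succ_r. simpl. rewrite IH. lra.
Qed.

Lemma psum_incr a n1 n2 : (forall k, 0 <= a k) -> (n1 <= n2)%nat -> psum a n1 <= psum a n2.
Proof.
  intros H Hn. replace n2 with (n1 + (n2 - n1))%nat by lia. rewrite psum_add.
  pose proof (psum_ge0 (fun k => a (n1 + k)%nat) (n2 - n1) (fun k => H _)). lra.
Qed.

Lemma psum_ge_term a n k : (forall k, 0 <= a k) -> (k < n)%nat -> a k <= psum a n.
Proof.
  intros H Hk. eapply Rle_trans; [|apply (psum_incr a (S k) n H Hk)]. simpl.
  pose proof (psum_ge0 a k H). lra.
Qed.

Lemma psum_stable a n0 n : (n0 <= n)%nat -> (forall k, (n0 <= k)%nat -> a k = 0) ->
  psum a n = psum a n0.
Proof.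
  intros Hn Hz. replace n with (n0 + (n - n0))%nat by lia. rewrite psum_add, (psum_0 (fun k => a (n0 + k)%nat)); [lra|].
  intros k _. apply Hz. lia.
Qed.

Lemma psum_delta (u : R) k n : (k < n)%nat -> psum (fun i => if Nat.eqb i k then u else 0) n = u.
Proof.
  intros Hk. replace n with (S k + (n - S k))%nat by lia. rewrite psum_add.
  rewrite (psum_0 (fun i => if Nat.eqb (S k + i) k then u else 0)).
  - simpl. rewrite Nat.eqb_refl, psum_0; [lra|]. intros i Hi. destruct (Nat.eqb_spec i k); [lia|auto].
  - intros i _. destruct (Nat.eqb_spec (S k + i) k); [lia|auto].
Qed.

Lemma Rabs_psum_le a n : Rabs (psum a n) <= psum (fun k => Rabs (a k)) n.
Proof. induction n; simpl; [rewrite Rabs_R0; lra|]. eapply Rle_trans; [apply Rabs_triang|]. lra. Qed.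

Lemma psum_comm (F : nat -> nat -> R) m n :
  psum (fun k => psum (fun i => F i k) m) n = psum (fun i => psum (F i) n) m.
Proof.
  induction m as [|m IH]; simpl.
  - apply psum_0. auto.
  - rewrite psum_plus, IH. auto.
Qed.

Lemma psum_half_pow_le1 n : psum (fun k => (1/2) ^ (S k)) n <= 1.
Proof.
  assert (H : psum (fun k => (1/2) ^ (S k)) n <= 1 - (1/2) ^ n).
  { induction n; simpl psum; simpl pow in *; lra. }
  pose proof (pow_le (1/2) n ltac:(lra)). lra.
Qed.

Lemma ex_series_psum_bounded a B : (forall k, 0 <= a k) -> (forall n, psum a n <= B) ->
  ex_series a /\ Series a <= B.
Proof.
  intros Ha HB.
  destruct (ex_finite_lim_seq_incr (sum_n a) B) as [s Hs].
  - intros n. rewrite !sum_n_psum. apply psum_incr; auto.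
  - intros n. rewrite sum_n_psum; auto.
  - split; [exists s; exact Hs|].
    unfold Series. rewrite (is_lim_seq_unique _ _ Hs).
    assert (Hle : Rbar_le s B).
    { apply (is_lim_seq_le (sum_n a) (fun _ => B)); auto using is_lim_seq_const.
      intros n; rewrite sum_n_psum; auto. }
    exact Hle.
Qed.

Lemma psum_le_Series a n : (forall k, 0 <= a k) -> ex_series a -> psum a n <= Series a.
Proof.
  intros Ha [s Hs]. rewrite (is_series_unique _ _ Hs).
  assert (Hle : Rbar_le (psum a n) s).
  { apply (is_lim_seq_le_loc (fun _ => psum a n) (sum_n a)); auto using is_lim_seq_const.
    exists n. intros k Hk. rewrite sum_n_psum. apply psum_incr; auto; lia. }
  exact Hle.
Qed.

Lemma psum_tail_le a eta : (forall k, 0 <= a k) -> ex_series a -> 0 < eta ->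
  eventually (fun n1 => forall n2, (n1 <= n2)%nat -> psum a n2 - psum a n1 <= eta).
Proof.
  intros Ha Hex Heta. destruct Hex as [s Hs].
  assert (Hlim : is_lim_seq (sum_n a) s) by exact Hs.
  apply is_lim_seq_spec in Hlim. destruct (Hlim (mkposreal eta Heta)) as [n0 Hn0].
  exists (S n0). intros n1 Hn1 n2 Hn2.
  specialize (Hn0 (pred n1) ltac:(lia)). simpl in Hn0.
  rewrite sum_n_psum, Nat.succ_pred_pos in Hn0 by lia.
  pose proof (psum_le_Series a n2 Ha (ex_intro _ s Hs)) as Hle.
  rewrite (is_series_unique _ _ Hs) in Hle. apply Rabs_def2 in Hn0. lra.
Qed.

Lemma eventually_forall_lt (P : nat -> nat -> Prop) N :
  (forall i, (i < N)%nat -> eventually (P i)) ->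
  eventually (fun n => forall i, (i < N)%nat -> P i n).
Proof.
  induction N as [|N IH]; intros H; [exists O; intros; lia|].
  apply (filter_imp (fun n => (forall i, (i < N)%nat -> P i n) /\ P N n)).
  - intros n [H1 H2] i Hi. destruct (Nat.eq_dec i N) as [->|]; auto. apply H1. lia.
  - apply filter_and; auto.
Qed.

Lemma abspow_ge0 a p : 0 <= abspow a p.
Proof. unfold abspow. destruct (Req_EM_T a 0); [lra|]. left. apply exp_pos. Qed.

Lemma abspow_0 p : abspow 0 p = 0.
Proof. unfold abspow. destruct (Req_EM_T 0 0); [auto|lra]. Qed.

Lemma abspow_neq0 a p : a <> 0 -> abspow a p = Rpower (Rabs a) p.
Proof. intros H. unfold abspow. destruct (Req_EM_T a 0); [contradiction|auto]. Qed.

Lemma abspow_pos a p : 0 < a -> abspow a p = Rpower a p.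
Proof. intros H. rewrite abspow_neq0, Rabs_right; lra. Qed.

Lemma abspow_Rabs a p : abspow (Rabs a) p = abspow a p.
Proof.
  destruct (Req_EM_T a 0) as [->|H]; [rewrite Rabs_R0; auto|].
  pose proof (Rabs_pos_lt a H). rewrite abspow_pos, abspow_neq0; auto.
Qed.

Lemma abspow_le a b p : 0 <= p -> Rabs a <= Rabs b -> abspow a p <= abspow b p.
Proof.
  intros Hp H. destruct (Req_EM_T a 0) as [->|Ha]; [rewrite abspow_0; apply abspow_ge0|].
  pose proof (Rabs_pos_lt a Ha).
  assert (Hb : b <> 0) by (intros ->; rewrite Rabs_R0 in H; lra).
  rewrite !abspow_neq0 by auto. apply Rle_Rpower_l; lra.
Qed.

Lemma abspow_le_Rabs a p : 1 <= p -> Rabs a <= 1 -> abspow a p <= Rabs a.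
Proof.
  intros Hp H. destruct (Req_EM_T a 0) as [->|Ha]; [rewrite abspow_0, Rabs_R0; lra|].
  pose proof (Rabs_pos_lt a Ha). rewrite abspow_neq0 by auto. unfold Rpower.
  assert (Hln : ln (Rabs a) <= 0).
  { rewrite <- ln_1. destruct (Req_dec (Rabs a) 1) as [->|E]; [lra|].
    left. apply ln_increasing; lra. }
  rewrite <- (exp_ln (Rabs a)) at 2 by lra.
  assert (Hle : p * ln (Rabs a) <= ln (Rabs a)) by nra.
  destruct (Rle_lt_or_eq_dec _ _ Hle) as [Hlt| ->]; [left; apply exp_increasing|]; lra.
Qed.

Lemma abspow_mult a b p : abspow (a * b) p = abspow a p * abspow b p.
Proof.
  destruct (Req_EM_T a 0) as [->|Ha]; [rewrite Rmult_0_l, abspow_0; lra|].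
  destruct (Req_EM_T b 0) as [->|Hb]; [rewrite Rmult_0_r, abspow_0; lra|].
  rewrite !abspow_neq0 by (auto; intros H; apply Rmult_integral in H; tauto).
  rewrite Rabs_mult. symmetry. apply Rpower_mult_distr; apply Rabs_pos_lt; auto.
Qed.

(* [|a + b| <= 2 max(|a|, |b|)] *)
Lemma abspow_plus_le a b p : 0 <= p ->
  abspow (a + b) p <= Rpower 2 p * (abspow a p + abspow b p).
Proof.
  intros Hp. set (c := Rmax (Rabs a) (Rabs b)).
  assert (Hc : 0 <= c) by (eapply Rle_trans; [apply Rabs_pos|apply Rmax_l]).
  eapply Rle_trans.
  { apply (abspow_le _ (2 * c)); auto.
    rewrite Rabs_mult, (Rabs_right 2), (Rabs_right c) by lra.
    pose proof (Rabs_triang a b). pose proof (Rmax_l (Rabs a) (Rabs b)) as Ha.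
    pose proof (Rmax_r (Rabs a) (Rabs b)) as Hb. fold c in Ha, Hb. lra. }
  rewrite abspow_mult, abspow_pos by lra.
  apply Rmult_le_compat_l; [left; apply exp_pos|].
  pose proof (abspow_ge0 a p). pose proof (abspow_ge0 b p).
  unfold c, Rmax. destruct (Rle_dec (Rabs a) (Rabs b)); rewrite abspow_Rabs; lra.
Qed.

Lemma abspow_inv_lt s eps p : 0 < p -> 0 <= s -> 0 < eps -> s < Rpower eps p ->
  abspow s (/ p) < eps.
Proof.
  intros Hp Hs He H.
  destruct (Req_EM_T s 0) as [->|Hs0]; [rewrite abspow_0; lra|].
  rewrite abspow_pos by lra.
  replace eps with (Rpower (Rpower eps p) (/ p))
    by (rewrite Rpower_mult, Rinv_r, Rpower_1; lra).
  apply Rlt_Rpower_l; [apply Rinv_0_lt_compat|]; lra.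
Qed.

Lemma abspow_inv_le s t p : 0 < p -> 0 <= s <= t -> abspow s (/ p) <= abspow t (/ p).
Proof.
  intros Hp Hst. apply abspow_le; [left; apply Rinv_0_lt_compat; lra|].
  rewrite !Rabs_right; lra.
Qed.

Lemma abspow_inv_Rpower_mult c s p : 0 < p -> 0 < c -> 0 <= s ->
  abspow (Rpower c p * s) (/ p) = c * abspow s (/ p).
Proof.
  intros Hp Hc Hs. destruct (Req_EM_T s 0) as [->|Hs0]; [rewrite Rmult_0_r, abspow_0; lra|].
  assert (0 < Rpower c p) by apply exp_pos.
  rewrite !abspow_pos by nra.
  rewrite <- Rpower_mult_distr, Rpower_mult, Rinv_r, Rpower_1; lra.
Qed.

(** * Sums over [Z] *)

(* [zsum g n] is the sum of [g j] over [-n <= j < n]. *)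
Definition zsum (g : Z -> R) (n : nat) : R := psum (zfold g) n.

Lemma zsum_S g n : zsum g (S n) = zsum g n + g (Z.of_nat n) + g (- Z.of_nat n - 1)%Z.
Proof. unfold zsum, zfold. simpl. lra. Qed.

Lemma zfold_ge0 g k : (forall j, 0 <= g j) -> 0 <= zfold g k.
Proof.
  intros H. unfold zfold. pose proof (H (Z.of_nat k)). pose proof (H (- Z.of_nat k - 1)%Z). lra.
Qed.

Lemma zsum_incr g n1 n2 : (forall j, 0 <= g j) -> (n1 <= n2)%nat -> zsum g n1 <= zsum g n2.
Proof. intros H Hn. apply psum_incr; auto. intros. apply zfold_ge0; auto. Qed.

Lemma zsum_le g h n : (forall j, (- Z.of_nat n <= j < Z.of_nat n)%Z -> g j <= h j) ->
  zsum g n <= zsum h n.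
Proof.
  intros H. apply psum_le. intros k Hk. unfold zfold.
  pose proof (H (Z.of_nat k) ltac:(lia)). pose proof (H (- Z.of_nat k - 1)%Z ltac:(lia)). lra.
Qed.

Lemma zsum_ext g h n : (forall j, g j = h j) -> zsum g n = zsum h n.
Proof. intros H. apply psum_ext. intros k _. unfold zfold. rewrite !H. auto. Qed.

Lemma zsum_plus g h n : zsum (fun j => g j + h j) n = zsum g n + zsum h n.
Proof. unfold zsum. rewrite <- psum_plus. apply psum_ext. intros. unfold zfold. lra. Qed.

Lemma zsum_scal c g n : zsum (fun j => c * g j) n = c * zsum g n.
Proof. unfold zsum. rewrite <- psum_scal. apply psum_ext. intros. unfold zfold. lra. Qed.

Lemma zsum_psum_comm (G : nat -> Z -> R) m n :
  zsum (fun j => psum (fun i => G i j) m) n = psum (fun i => zsum (G i) n) m.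
Proof.
  unfold zsum. rewrite <- psum_comm. apply psum_ext. intros k _. unfold zfold.
  rewrite <- psum_plus. auto.
Qed.

Lemma zsum_le_Series g n : (forall j, 0 <= g j) -> ex_series (zfold g) ->
  zsum g n <= Series (zfold g).
Proof. intros H Hs. apply psum_le_Series; auto. intros. apply zfold_ge0; auto. Qed.

Lemma ex_series_zsum_bounded g B : (forall j, 0 <= g j) -> (forall n, zsum g n <= B) ->
  ex_series (zfold g) /\ Series (zfold g) <= B.
Proof. intros H HB. apply ex_series_psum_bounded; auto. intros. apply zfold_ge0; auto. Qed.

Lemma Series_zfold_ge0 g : (forall j, 0 <= g j) -> ex_series (zfold g) -> 0 <= Series (zfold g).
Proof. intros H Hs. eapply Rle_trans; [|apply (zsum_le_Series g 0 H Hs)]. unfold zsum. simpl. lra. Qed.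

Lemma le_zsum_point g j : (forall j, 0 <= g j) -> g j <= zsum g (S (Z.to_nat (Z.abs j))).
Proof.
  intros H. set (k := Z.to_nat (if Z_le_gt_dec 0 j then j else - j - 1)%Z).
  assert (Hk : j = Z.of_nat k \/ j = (- Z.of_nat k - 1)%Z)
    by (unfold k; destruct (Z_le_gt_dec 0 j); lia).
  eapply Rle_trans; [|apply (psum_ge_term (zfold g) _ k); [intros; apply zfold_ge0; auto|]].
  2: unfold k; destruct (Z_le_gt_dec 0 j); lia.
  unfold zfold. pose proof (H (Z.of_nat k)). pose proof (H (- Z.of_nat k - 1)%Z).
  destruct Hk as [E|E]; rewrite E; lra.
Qed.

Lemma zsum_shift_succ g n :
  zsum (fun j => g (j + 1)%Z) n + g (- Z.of_nat n)%Z = zsum g n + g (Z.of_nat n).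
Proof.
  induction n as [|n IH]; [unfold zsum; simpl; replace (- 0)%Z with 0%Z by lia; lra|].
  rewrite !zsum_S, Nat2Z.inj_succ.
  replace (- Z.of_nat n - 1 + 1)%Z with (- Z.of_nat n)%Z in * by lia.
  replace (- Z.succ (Z.of_nat n))%Z with (- Z.of_nat n - 1)%Z by lia.
  replace (Z.of_nat n + 1)%Z with (Z.succ (Z.of_nat n)) by lia. lra.
Qed.

Lemma zsum_shift_pred g n :
  zsum (fun j => g (j - 1)%Z) n + g (Z.of_nat n - 1)%Z = zsum g n + g (- Z.of_nat n - 1)%Z.
Proof.
  induction n as [|n IH]; [unfold zsum; simpl; replace (- 0 - 1)%Z with (0 - 1)%Z by lia; lra|].
  rewrite !zsum_S, Nat2Z.inj_succ.
  replace (Z.succ (Z.of_nat n) - 1)%Z with (Z.of_nat n) by lia.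
  replace (- Z.succ (Z.of_nat n) - 1)%Z with (- Z.of_nat n - 1 - 1)%Z by lia. lra.
Qed.

Lemma zsum_shift_unit_le g s n : (forall j, 0 <= g j) -> (s = 1 \/ s = -1)%Z ->
  zsum (fun j => g (j + s)%Z) n <= zsum g (S n).
Proof.
  intros Hg [-> | ->]; rewrite zsum_S.
  - pose proof (zsum_shift_succ g n). pose proof (Hg (- Z.of_nat n)%Z).
    pose proof (Hg (- Z.of_nat n - 1)%Z). lra.
  - rewrite (zsum_ext _ (fun j => g (j - 1)%Z)) by (intros; f_equal; lia).
    pose proof (zsum_shift_pred g n). pose proof (Hg (Z.of_nat n - 1)%Z).
    pose proof (Hg (Z.of_nat n)). lra.
Qed.

Lemma zsum_shift_le g q n : (forall j, 0 <= g j) ->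
  zsum (fun j => g (j + q)%Z) n <= zsum g (n + Z.to_nat (Z.abs q)).
Proof.
  intros Hg. set (s := if (q <? 0)%Z then (-1)%Z else 1%Z).
  assert (Hs : (s = 1 \/ s = -1)%Z) by (unfold s; destruct (q <? 0)%Z; auto).
  assert (Hk : forall k g, (forall j, 0 <= g j) ->
    zsum (fun j => g (j + Z.of_nat k * s)%Z) n <= zsum g (n + k)).
  { clear g Hg. induction k as [|k IH]; intros g Hg.
    - rewrite Nat.add_0_r. right. apply zsum_ext. intros. f_equal. lia.
    - rewrite (zsum_ext _ (fun j => g (j + Z.of_nat k * s + s)%Z)) by (intros; f_equal; lia).
      eapply Rle_trans; [apply (IH (fun j => g (j + s)%Z)); auto|].
      rewrite Nat.add_succ_r. apply zsum_shift_unit_le; auto. }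
  rewrite (zsum_ext _ (fun j => g (j + Z.of_nat (Z.to_nat (Z.abs q)) * s)%Z)); auto.
  intros j. f_equal. unfold s. destruct (Z.ltb_spec q 0); lia.
Qed.

Lemma zsum_window_count c len n : (0 <= len)%Z ->
  zsum (fun j => if andb (c <=? j)%Z (j <? c + len)%Z then 1 else 0) n <= IZR len.
Proof.
  intros Hlen.
  enough (E : zsum (fun j => if andb (c <=? j)%Z (j <? c + len)%Z then 1 else 0) n
            = IZR (Z.max 0 (Z.min (Z.of_nat n) (c + len) - Z.max (- Z.of_nat n) c))).
  { rewrite E. apply IZR_le. lia. }
  induction n as [|n IH]; [unfold zsum; simpl; f_equal; lia|].
  rewrite zsum_S, IH.
  destruct (Z.leb_spec c (Z.of_nat n)), (Z.ltb_spec (Z.of_nat n) (c + len)),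
    (Z.leb_spec c (- Z.of_nat n - 1)), (Z.ltb_spec (- Z.of_nat n - 1) (c + len));
    simpl; rewrite <- ?plus_IZR; f_equal; lia.
Qed.

Lemma zsum_le_supported g c len delta n : (0 <= len)%Z -> 0 <= delta ->
  (forall j, 0 <= g j) -> (forall j, (c <= j < c + len)%Z -> g j <= delta) ->
  (forall j, (j < c \/ c + len <= j)%Z -> g j = 0) ->
  zsum g n <= delta * IZR len.
Proof.
  intros Hlen Hd Hg Hin Hout.
  eapply Rle_trans with (zsum (fun j => delta * if andb (c <=? j)%Z (j <? c + len)%Z then 1 else 0) n).
  - apply zsum_le. intros j _.
    destruct (Z.leb_spec c j), (Z.ltb_spec j (c + len)); simpl;
      [rewrite Rmult_1_r; apply Hin; lia|rewrite Hout by lia; lra..].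
  - rewrite zsum_scal. apply Rmult_le_compat_l; auto. apply zsum_window_count; auto.
Qed.

(** * Weighted shifts on l^p(Z) *)

Lemma in_lp_zsum_bounded p x B :
  (forall n, zsum (fun j => abspow (x j) p) n <= B) -> in_lp p x.
Proof. intros H. apply (ex_series_zsum_bounded _ B); auto. intros. apply abspow_ge0. Qed.

Lemma lp_norm_lt p x eps B : 0 < p -> 0 < eps -> B < Rpower eps p ->
  (forall n, zsum (fun j => abspow (x j) p) n <= B) -> lp_norm p x < eps.
Proof.
  intros Hp He HB H.
  destruct (ex_series_zsum_bounded _ B (fun j => abspow_ge0 _ p) H) as [Hex HS].
  unfold lp_norm. apply abspow_inv_lt; auto; [|lra].
  apply Series_zfold_ge0; auto. intros. apply abspow_ge0.
Qed.

(* Uses [|a|^p <= |a|] for [|a| <= 1]: a small l^1 error is a small l^p error. *)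
Lemma lp_norm_zsub_lt p x u y eps a b : 1 <= p -> 0 < eps ->
  (forall n, zsum (fun j => Rabs (x j - u j)) n <= a) -> a <= 1 ->
  (forall n, zsum (fun j => abspow (u j - y j) p) n <= b) ->
  Rpower 2 p * (a + b) < Rpower eps p -> lp_norm p (zsub x y) < eps.
Proof.
  intros Hp He Hxu Ha Huy Hab.
  assert (Hpt : forall j, Rabs (x j - u j) <= 1).
  { intros j. eapply Rle_trans; [|apply Ha]. eapply Rle_trans; [|apply Hxu].
    apply (le_zsum_point (fun j => Rabs (x j - u j))). intros. apply Rabs_pos. }
  apply (lp_norm_lt _ _ _ (Rpower 2 p * (a + b))); auto; [lra|]. intros n.
  eapply Rle_trans.
  { apply (zsum_le _ (fun j => Rpower 2 p * (Rabs (x j - u j) + abspow (u j - y j) p))).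
    intros j _. unfold zsub. replace (x j - y j) with ((x j - u j) + (u j - y j)) by ring.
    eapply Rle_trans; [apply abspow_plus_le; lra|].
    apply Rmult_le_compat_l; [left; apply exp_pos|].
    pose proof (abspow_le_Rabs _ _ Hp (Hpt j)). lra. }
  rewrite zsum_scal, zsum_plus. apply Rmult_le_compat_l; [left; apply exp_pos|].
  pose proof (Hxu n). pose proof (Huy n). lra.
Qed.

Lemma zsum_abspow_pseudo_shift_le p q w M x n : 0 < p -> 0 < M ->
  (forall k, Rabs (w k) <= M) -> in_lp p x ->
  zsum (fun j => abspow (pseudo_shift (shift_map q) w x j) p) n
  <= Rpower M p * Series (zfold (fun j => abspow (x j) p)).
Proof.
  intros Hp HM Hw Hx. pose proof (fun j => abspow_ge0 (x j) p) as Hx0.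
  eapply Rle_trans.
  { apply (zsum_le _ (fun j => Rpower M p * abspow (x (j + q)%Z) p)). intros j _.
    rewrite <- (abspow_pos M p HM), <- abspow_mult. apply abspow_le; [lra|].
    unfold pseudo_shift, shift_map. rewrite !Rabs_mult, (Rabs_right M) by lra.
    apply Rmult_le_compat_r; auto using Rabs_pos. }
  rewrite zsum_scal. apply Rmult_le_compat_l; [left; apply exp_pos|].
  eapply Rle_trans; [apply (zsum_shift_le (fun j => abspow (x j) p)); auto|].
  apply zsum_le_Series; auto.
Qed.

Lemma pseudo_shift_bounded p q w M : 1 <= p -> 0 < M -> (forall k, Rabs (w k) <= M) ->
  bounded_op p (pseudo_shift (shift_map q) w).
Proof.
  intros Hp HM Hw.
  assert (H : forall x, in_lp p x -> forall n,
    zsum (fun j => abspow (pseudo_shift (shift_map q) w x j) p) n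
    <= Rpower M p * Series (zfold (fun j => abspow (x j) p)))
    by (intros; apply zsum_abspow_pseudo_shift_le; auto; lra).
  split; [|split].
  - intros x Hx. exact (in_lp_zsum_bounded _ _ _ (H x Hx)).
  - intros a b x y _ _. apply functional_extensionality. intros j. unfold pseudo_shift. ring.
  - exists M. intros x Hx.
    destruct (ex_series_zsum_bounded _ _ (fun j => abspow_ge0 _ p) (H x Hx)) as [HTx HS].
    unfold lp_norm. rewrite <- abspow_inv_Rpower_mult by
      (try lra; apply Series_zfold_ge0; auto; intros; apply abspow_ge0).
    apply abspow_inv_le; [lra|]. split; auto.
    apply Series_zfold_ge0; auto. intros. apply abspow_ge0.
Qed.

Lemma pseudo_shift_inverse p q w M : 1 <= p -> 0 < M -> (forall k, w k <> 0) ->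
  (forall k, Rabs (w k) <= M) -> (forall k, Rabs (/ w k) <= M) ->
  inverse_op p (pseudo_shift (shift_map q) w)
               (pseudo_shift (shift_map (- q)) (fun k => / w (k + q)%Z)).
Proof.
  intros Hp HM Hw0 Hw Hwinv.
  split; [|split; [|split]]; try (apply (pseudo_shift_bounded _ _ _ M); auto).
  all: intros x _; apply functional_extensionality; intros j;
    unfold pseudo_shift, shift_map.
  - replace (j + - q + q)%Z with j by lia. field. auto.
  - replace (j + q + - q)%Z with j by lia. field. auto.
Qed.

Definition zreflect (x : zseq) : zseq := fun j => x (- j - 1)%Z.

Lemma zreflect_involutive x : zreflect (zreflect x) = x.
Proof. apply functional_extensionality. intros j. unfold zreflect. f_equal. lia. Qed.

Lemma zfold_zreflect g : zfold (fun j => g (- j - 1)%Z) = zfold g.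
Proof.
  apply functional_extensionality. intros k. unfold zfold.
  replace (- (- Z.of_nat k - 1) - 1)%Z with (Z.of_nat k) by lia. lra.
Qed.

Lemma in_lp_zreflect p x : in_lp p (zreflect x) <-> in_lp p x.
Proof. unfold in_lp, zreflect. rewrite (zfold_zreflect (fun j => abspow (x j) p)). tauto. Qed.

Lemma lp_norm_zreflect p x : lp_norm p (zreflect x) = lp_norm p x.
Proof. unfold lp_norm, zreflect. rewrite (zfold_zreflect (fun j => abspow (x j) p)). auto. Qed.

Lemma zreflect_pseudo_shift q w x :
  zreflect (pseudo_shift (shift_map q) w (zreflect x))
  = pseudo_shift (shift_map (- q)) (fun k => w (- k - 1)%Z) x.
Proof.
  apply functional_extensionality. intros j. unfold zreflect, pseudo_shift, shift_map.
  f_equal; f_equal; lia.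
Qed.

Lemma disjoint_hypercyclic_zreflect p N (T : nat -> zseq -> zseq) :
  disjoint_hypercyclic p N T ->
  disjoint_hypercyclic p N (fun i x => zreflect (T i (zreflect x))).
Proof.
  intros [x [Hx Hdense]]. exists (zreflect x). split; [apply in_lp_zreflect; auto|].
  intros y Hy eps Heps.
  assert (Hy' : forall i, (i < N)%nat -> in_lp p (zreflect (y i)))
    by (intros; apply in_lp_zreflect; auto).
  destruct (Hdense _ Hy' eps Heps) as [n Hn].
  exists n. intros i Hi.
  assert (Eiter : forall m, Nat.iter m (fun x => zreflect (T i (zreflect x))) (zreflect x)
                            = zreflect (Nat.iter m (T i) x)).
  { induction m as [|m IH]; simpl; [auto|]. rewrite IH, zreflect_involutive. auto. }
  assert (Esub : forall a, zsub (zreflect a) (y i) = zreflect (zsub a (zreflect (y i)))).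
  { intros a. apply functional_extensionality. intros j. unfold zsub, zreflect. do 3 f_equal. lia. }
  rewrite Eiter, Esub, lp_norm_zreflect. apply Hn. auto.
Qed.

Fixpoint weight_prod (q : Z) (w : Z -> R) (n : nat) (j : Z) : R :=
  match n with
  | O => 1
  | S n => w (j + q)%Z * weight_prod q w n (j + q)%Z
  end.

Lemma iter_pseudo_shift q w n x j :
  Nat.iter n (pseudo_shift (shift_map q) w) x j = weight_prod q w n j * x (j + Z.of_nat n * q)%Z.
Proof.
  revert j. induction n as [|n IH]; intros j; simpl Nat.iter; simpl weight_prod.
  - replace (j + Z.of_nat 0 * q)%Z with j by lia. lra.
  - unfold pseudo_shift at 1, shift_map. rewrite IH.
    replace (j + q + Z.of_nat n * q)%Z with (j + Z.of_nat (S n) * q)%Z by lia. lra.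
Qed.

Lemma weight_prod_neq0 q w n j : (forall k, w k <> 0) -> weight_prod q w n j <> 0.
Proof.
  intros Hw. revert j. induction n as [|n IH]; intros j; simpl; [lra|].
  apply Rmult_integral_contrapositive. auto.
Qed.

Lemma Rabs_weight_prod_le q w M n j : (forall k, Rabs (w k) <= M) ->
  Rabs (weight_prod q w n j) <= M ^ n.
Proof.
  intros Hw. revert j. induction n as [|n IH]; intros j; simpl; [rewrite Rabs_R1; lra|].
  rewrite Rabs_mult. apply Rmult_le_compat; auto using Rabs_pos.
Qed.

Definition vanishes_locally_uniformly (f : nat -> Z -> R) : Prop :=
  forall r eta, 0 < eta -> eventually (fun n => forall t, (Z.abs t <= r)%Z -> f n t <= eta).

Lemma vanishes_mult f c r eps : vanishes_locally_uniformly f -> 0 <= c -> 0 < eps ->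
  eventually (fun n => forall t, (Z.abs t <= r)%Z -> c * f n t <= eps).
Proof.
  intros Hf Hc He.
  apply (filter_imp (fun n => forall t, (Z.abs t <= r)%Z -> f n t <= eps / (c + 1))).
  - intros n H t Ht. specialize (H t Ht).
    apply Rle_trans with (c * (eps / (c + 1))); [apply Rmult_le_compat_l; auto|].
    unfold Rdiv. rewrite <- Rmult_assoc. apply (Rmult_le_reg_r (c + 1)); [lra|].
    rewrite Rmult_assoc, Rinv_l; nra.
  - apply Hf. apply Rdiv_lt_0_compat; lra.
Qed.

(** * A countable dense family of finitely supported targets *)

Fixpoint decode_list (fuel n : nat) : list nat :=
  match fuel, n with
  | S f, S n' => let (a, b) := Cantor.of_nat n' in a :: decode_list f b
  | _, _ => nil
  end.

Fixpoint encode_list (c : list nat) : nat :=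
  match c with nil => O | a :: c' => S (Cantor.to_nat (a, encode_list c')) end.

Definition decode_nat_list (n : nat) : list nat := decode_list n n.

Lemma decode_encode_list c : decode_nat_list (encode_list c) = c.
Proof.
  unfold decode_nat_list.
  enough (H : forall f, (encode_list c <= f)%nat -> decode_list f (encode_list c) = c) by auto.
  induction c as [|a c IH]; intros [|f] Hf; cbn [encode_list decode_list] in *; auto; try lia.
  rewrite Cantor.cancel_of_to. f_equal. apply IH.
  pose proof (Cantor.to_nat_non_decreasing a (encode_list c)). lia.
Qed.

Definition Z_of_code (n : nat) : Z := let (a, b) := Cantor.of_nat n in (Z.of_nat a - Z.of_nat b)%Z.
Definition code_of_Z (z : Z) : nat := Cantor.to_nat (Z.to_nat z, Z.to_nat (- z)).

Lemma Z_of_code_of_Z z : Z_of_code (code_of_Z z) = z.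
Proof. unfold Z_of_code, code_of_Z. rewrite Cantor.cancel_of_to. lia. Qed.

Definition in_window (K : nat) (j : Z) : bool :=
  andb (- (Z.of_nat K + 1) <=? j)%Z (j <? Z.of_nat K + 1)%Z.

(* Target [m] is read off [decode_nat_list m = K :: c]: for the [i]-th operator it lives on
   the window [-K-1, K] and takes there the values [Z_of_code c_r / (K+1)^2], the
   entries of [c] being listed window by window. *)
Definition target_radius (m : nat) : nat := nth 0 (decode_nat_list m) O.

Definition target (m i : nat) (j : Z) : R :=
  let K := target_radius m in
  if in_window K j then
    IZR (Z_of_code (nth (S (i * (2 * K + 2) + Z.to_nat (j + Z.of_nat K + 1))) (decode_nat_list m) O))
      / (INR K + 1) ^ 2
  else 0.

Definition target_bound (m : nat) : R :=
  fold_right (fun e s => Rabs (IZR (Z_of_code e)) + s) 0 (decode_nat_list m).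

Lemma target_out m i j :
  (j < - (Z.of_nat (target_radius m) + 1) \/ Z.of_nat (target_radius m) + 1 <= j)%Z ->
  target m i j = 0.
Proof.
  intros H. unfold target, in_window.
  destruct (Z.leb_spec (- (Z.of_nat (target_radius m) + 1)) j),
    (Z.ltb_spec j (Z.of_nat (target_radius m) + 1)); simpl; auto; lia.
Qed.

Lemma Rabs_nth_le_fold (c : list nat) k :
  Rabs (IZR (Z_of_code (nth k c O))) <= fold_right (fun e s => Rabs (IZR (Z_of_code e)) + s) 0 c.
Proof.
  assert (Hge0 : forall c', 0 <= fold_right (fun e s => Rabs (IZR (Z_of_code e)) + s) 0 c').
  { induction c' as [|a c' IH]; simpl; [lra|]. pose proof (Rabs_pos (IZR (Z_of_code a))). lra. }
  revert k. induction c as [|a c IH]; intros [|k]; simpl.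
  1, 2: unfold Z_of_code; simpl; rewrite Rabs_R0; lra.
  - pose proof (Hge0 c). lra.
  - pose proof (Rabs_pos (IZR (Z_of_code a))). specialize (IH k). lra.
Qed.

Lemma target_bound_ge0 m : 0 <= target_bound m.
Proof. eapply Rle_trans; [apply Rabs_pos|apply (Rabs_nth_le_fold _ O)]. Qed.

Lemma Rabs_target_le m i j : Rabs (target m i j) <= target_bound m.
Proof.
  unfold target. destruct (in_window _ _); [|rewrite Rabs_R0; apply target_bound_ge0].
  assert (Hs : 1 <= (INR (target_radius m) + 1) ^ 2)
    by (pose proof (pos_INR (target_radius m)); simpl; nra).
  unfold Rdiv. rewrite Rabs_mult, Rabs_inv, (Rabs_right ((_ + 1) ^ 2)) by lra.
  eapply Rle_trans; [|apply Rabs_nth_le_fold].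
  rewrite <- (Rmult_1_r (Rabs (IZR _))) at 2. apply Rmult_le_compat_l; [apply Rabs_pos|].
  rewrite <- Rinv_1 at 2. apply Rinv_le_contravar; lra.
Qed.

Lemma target_encode N K (v : nat -> Z -> Z) : exists m, target_radius m = K /\
  forall i j, (i < N)%nat -> in_window K j = true ->
  target m i j = IZR (v i j) / (INR K + 1) ^ 2.
Proof.
  set (L := (2 * K + 2)%nat).
  set (g := fun r => code_of_Z (v (r / L)%nat (Z.of_nat (r mod L) - Z.of_nat K - 1)%Z)).
  exists (encode_list (K :: map g (seq 0 (N * L)))).
  unfold target_radius. rewrite decode_encode_list. split; auto.
  intros i j Hi Hj. unfold target, target_radius. rewrite decode_encode_list. cbn [nth].
  rewrite Hj.
  unfold in_window in Hj. apply andb_prop in Hj. destruct Hj as [Hj1 Hj2].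
  apply Z.leb_le in Hj1. apply Z.ltb_lt in Hj2.
  set (r := Z.to_nat (j + Z.of_nat K + 1)). fold L.
  assert (Hr : (r < L)%nat) by (unfold r, L; lia).
  rewrite nth_indep with (d' := g O) by (rewrite length_map, length_seq; nia).
  rewrite map_nth, seq_nth by nia. unfold g. rewrite Nat.add_0_l.
  rewrite Nat.div_add_l, Nat.div_small, Nat.add_0_r by lia.
  rewrite Nat.add_comm, Nat.Div0.mod_add, Nat.mod_small by lia.
  rewrite Z_of_code_of_Z. do 3 f_equal. unfold r. lia.
Qed.

Lemma target_round p N K (y : nat -> zseq) : 1 <= p -> exists m, target_radius m = K /\
  forall i j, (i < N)%nat ->
  (in_window K j = true -> abspow (target m i j - y i j) p <= / (INR K + 1) ^ 2) /\
  (in_window K j = false -> abspow (target m i j - y i j) p = abspow (y i j) p).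
Proof.
  intros Hp. set (s := (INR K + 1) ^ 2).
  assert (Hs : 1 <= s) by (unfold s; pose proof (pos_INR K); simpl; nra).
  destruct (target_encode N K (fun i j => up (y i j * s))) as [m [EK Hm]].
  exists m. split; auto. intros i j Hi. split; intros Hj.
  - rewrite Hm by auto. destruct (archimed (y i j * s)) as [Hup1 Hup2].
    replace (IZR (up (y i j * s)) / (INR K + 1) ^ 2 - y i j)
      with ((IZR (up (y i j * s)) - y i j * s) * / s) by (unfold s; pose proof (pos_INR K); field; lra).
    assert (Hinv : 0 < / s <= 1)
      by (split; [apply Rinv_0_lt_compat|rewrite <- Rinv_1; apply Rinv_le_contravar]; lra).
    assert (H0 : 0 <= (IZR (up (y i j * s)) - y i j * s) * / s <= / s) by (split; nra).
    eapply Rle_trans; [apply abspow_le_Rabs; auto; rewrite Rabs_right|rewrite Rabs_right]; lra.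
  - unfold target. rewrite EK, Hj, Rminus_0_l, <- abspow_Rabs, Rabs_Ropp. apply abspow_Rabs.
Qed.

Lemma targets_dense p N (y : nat -> zseq) eta : 1 <= p ->
  (forall i, (i < N)%nat -> in_lp p (y i)) -> 0 < eta ->
  exists m, / (INR (target_radius m) + 1) <= eta /\
    forall i n, (i < N)%nat -> zsum (fun j => abspow (target m i j - y i j) p) n <= eta.
Proof.
  intros Hp Hy He.
  set (a := fun i => zfold (fun j => abspow (y i j) p)).
  assert (Ha : forall i k, 0 <= a i k) by (intros; apply zfold_ge0; intros; apply abspow_ge0).
  destruct (eventually_forall_lt _ N
    (fun i Hi => psum_tail_le (a i) (eta / 2) (Ha i) (Hy i Hi) ltac:(lra))) as [K0 HK0].
  destruct (archimed_cor1 (eta / 4)) as [K1 [HK1 HK1pos]]; [lra|].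
  set (K := (K0 + K1)%nat).
  assert (HK : / (INR K + 1) <= eta / 4).
  { assert (INR K1 <= INR K) by (apply le_INR; unfold K; lia).
    assert (0 < INR K1) by (apply lt_0_INR; auto).
    pose proof (Rinv_le_contravar (INR K1) (INR K + 1) ltac:(lra) ltac:(lra)). lra. }
  destruct (target_round p N K y Hp) as [m [EK Hm]].
  exists m. rewrite EK. split; [lra|]. intros i n Hi.
  set (g := fun j => abspow (target m i j - y i j) p).
  assert (Hg : forall j, 0 <= g j) by (intros; apply abspow_ge0).
  assert (Hwin : zsum g (S K) <= eta / 2).
  { eapply Rle_trans; [apply (zsum_le _ (fun _ => / (INR K + 1) ^ 2)); intros j Hj; apply Hm; auto|].
    - unfold in_window. apply andb_true_intro. split; [apply Z.leb_le|apply Z.ltb_lt]; lia.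
    - unfold zsum, zfold. rewrite psum_const, S_INR. pose proof (pos_INR K).
      replace ((INR K + 1) * (/ (INR K + 1) ^ 2 + / (INR K + 1) ^ 2))
        with (2 * / (INR K + 1)) by (field; lra). lra. }
  assert (Htail : forall r, zsum g (S K + r) - zsum g (S K) <= eta / 2).
  { intros r. unfold zsum. rewrite psum_add.
    rewrite (psum_ext (fun k => zfold g (S K + k)%nat) (fun k => a i (S K + k)%nat)).
    - assert (HK0K : (K0 <= S K)%nat) by (unfold K; lia).
      pose proof (psum_add (a i) (S K) r). pose proof (HK0 (S K) HK0K i Hi (S K + r)%nat ltac:(lia)). lra.
    - intros k _. unfold zfold, a, g. rewrite !(proj2 (Hm i _ Hi)); auto;
        unfold in_window; apply Bool.andb_false_iff; [left; apply Z.leb_gt|right; apply Z.ltb_ge]; lia. }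
  destruct (le_lt_dec n (S K)) as [Hn|Hn].
  - pose proof (zsum_incr g n (S K) Hg Hn). lra.
  - replace n with (S K + (n - S K))%nat by lia. specialize (Htail (n - S K)%nat). lra.
Qed.

(** * Step weights *)

Lemma step_weight_neq0 lam l n : lam <> 0 -> step_weight lam l n <> 0.
Proof. intros H. unfold step_weight. destruct (l <? n)%Z; auto using Rinv_neq_0_compat. Qed.

Lemma Rabs_step_weight_le lam l n : 1 <= Rabs lam -> Rabs (step_weight lam l n) <= Rabs lam.
Proof.
  intros H. unfold step_weight. destruct (l <? n)%Z; [lra|].
  rewrite Rabs_inv. assert (/ Rabs lam <= / 1) by (apply Rinv_le_contravar; lra).
  rewrite Rinv_1 in *. lra.
Qed.

Lemma inv_step_weight_shift lam l q n :
  / step_weight lam l (n + q) = step_weight lam (q - 2 - l) (- n - 1).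
Proof.
  unfold step_weight.
  destruct (Z.ltb_spec l (n + q)), (Z.ltb_spec (q - 2 - l) (- n - 1)); try lia; auto.
  apply Rinv_inv.
Qed.

Lemma Rabs_inv_step_weight_le lam l n : 1 <= Rabs lam ->
  Rabs (/ step_weight lam l n) <= Rabs lam.
Proof.
  intros H. replace n with (n - 0 + 0)%Z by lia. rewrite inv_step_weight_shift.
  apply Rabs_step_weight_le. auto.
Qed.

(* The number of positions [j + r q] ([1 <= r <= n]) above [l] minus the number of those
   at or below [l]. *)
Fixpoint step_exponent (q l : Z) (n : nat) (j : Z) : Z :=
  match n with
  | O => 0
  | S n => ((if (l <? j + q)%Z then 1 else -1) + step_exponent q l n (j + q))%Z
  end.

Lemma Rabs_weight_prod_step q lam l n j : lam <> 0 ->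
  Rabs (weight_prod q (step_weight lam l) n j) = powerRZ (Rabs lam) (step_exponent q l n j).
Proof.
  intros H. revert j. induction n as [|n IH]; intros j; simpl; [apply Rabs_R1|].
  rewrite Rabs_mult, IH, powerRZ_add by (apply Rabs_no_R0; auto). f_equal.
  unfold step_weight. destruct (l <? j + q)%Z; simpl; [lra|].
  rewrite Rabs_inv. field. apply Rabs_no_R0. auto.
Qed.

Lemma step_exponent_add q l a b j :
  step_exponent q l (a + b) j = (step_exponent q l a j + step_exponent q l b (j + Z.of_nat a * q))%Z.
Proof.
  revert j. induction a as [|a IH]; intros j.
  - cbn [step_exponent Z.of_nat Nat.add]. rewrite Z.mul_0_l, Z.add_0_r. lia.
  - rewrite Nat.add_succ_l. cbn [step_exponent]. rewrite IH.
    replace (j + q + Z.of_nat a * q)%Z with (j + Z.of_nat (S a) * q)%Z by lia. lia.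
Qed.

Lemma step_exponent_bound q l n j : (Z.abs (step_exponent q l n j) <= Z.of_nat n)%Z.
Proof.
  revert j. induction n as [|n IH]; intros j; simpl; [lia|].
  specialize (IH (j + q)%Z). destruct (l <? j + q)%Z; lia.
Qed.

Lemma step_exponent_le q l n a j : (0 < q)%Z -> (a <= n)%nat -> (j + Z.of_nat a * q <= l)%Z ->
  (step_exponent q l n j <= Z.of_nat n - 2 * Z.of_nat a)%Z.
Proof.
  intros Hq Ha H.
  assert (Hbelow : forall j, (j + Z.of_nat a * q <= l)%Z -> step_exponent q l a j = (- Z.of_nat a)%Z).
  { clear H. induction a as [|a IH]; intros j' H'; [auto|].
    cbn [step_exponent]. rewrite IH by lia. destruct (Z.ltb_spec l (j' + q)); lia. }
  replace n with (a + (n - a))%nat by lia. rewrite step_exponent_add, Hbelow by auto.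
  pose proof (step_exponent_bound q l (n - a) (j + Z.of_nat a * q)). lia.
Qed.

Lemma step_exponent_ge q l n d j : (0 < q)%Z -> (l <= j + Z.of_nat d * q)%Z ->
  (Z.of_nat n - 2 * Z.of_nat d <= step_exponent q l n j)%Z.
Proof.
  intros Hq H. pose proof (step_exponent_bound q l n j).
  destruct (le_lt_dec d n) as [Hd|Hd]; [|lia].
  assert (Habove : forall m j, (l <= j)%Z -> step_exponent q l m j = Z.of_nat m).
  { induction m as [|m IH]; intros j' H'; [auto|].
    cbn [step_exponent]. rewrite IH by lia. destruct (Z.ltb_spec l (j' + q)); lia. }
  replace n with (d + (n - d))%nat by lia. rewrite step_exponent_add, (Habove (n - d)%nat) by auto.
  pose proof (step_exponent_bound q l d j). lia.
Qed.

Lemma powerRZ_le_mono L e1 e2 : 1 <= L -> (e1 <= e2)%Z -> powerRZ L e1 <= powerRZ L e2.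
Proof.
  intros HL He. rewrite !powerRZ_Rpower by lra. apply Rle_Rpower; auto. apply IZR_le. auto.
Qed.

Lemma powerRZ_small L eta : 1 < L -> 0 < eta ->
  exists E : nat, forall e, (e <= - Z.of_nat E)%Z -> powerRZ L e <= eta.
Proof.
  intros HL He. assert (HL' : Rabs (/ L) < 1).
  { rewrite Rabs_right by (left; apply Rinv_0_lt_compat; lra).
    rewrite <- Rinv_1. apply Rinv_lt_contravar; lra. }
  destruct (pow_lt_1_zero (/ L) HL' eta He) as [E HE]. exists E. intros e Hee.
  eapply Rle_trans; [apply (powerRZ_le_mono L _ _ ltac:(lra) Hee)|].
  rewrite powerRZ_neg', <- pow_powerRZ, <- pow_inv.
  specialize (HE E (le_n _)). rewrite Rabs_right in HE; [lra|].
  apply Rle_ge, pow_le. left. apply Rinv_0_lt_compat. lra.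
Qed.

Lemma Rabs_inv_weight_prod_step_le q lam l n d t : (0 < q)%Z -> 1 < Rabs lam ->
  (l <= t + Z.of_nat d * q)%Z ->
  / Rabs (weight_prod q (step_weight lam l) n t)
  <= powerRZ (Rabs lam) (2 * Z.of_nat d - Z.of_nat n).
Proof.
  intros Hq HL Hd. assert (Hlam : lam <> 0) by (intros ->; rewrite Rabs_R0 in HL; lra).
  rewrite Rabs_weight_prod_step, <- powerRZ_neg' by auto.
  apply powerRZ_le_mono; [lra|].
  pose proof (step_exponent_ge q l n d t Hq Hd). lia.
Qed.

Lemma step_inv_vanishes q lam l : (0 < q)%Z -> 1 < Rabs lam ->
  vanishes_locally_uniformly (fun n t => / Rabs (weight_prod q (step_weight lam l) n t)).
Proof.
  intros Hq HL r eta He. destruct (powerRZ_small _ _ HL He) as [E HE].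
  set (d := Z.to_nat (Z.abs r + Z.abs l)).
  exists (2 * d + E)%nat. intros n Hn t Ht.
  eapply Rle_trans; [apply (Rabs_inv_weight_prod_step_le _ _ _ _ d); auto; unfold d; nia|].
  apply HE. lia.
Qed.

Lemma step_fwd_vanishes q lam l : (0 < q)%Z -> 1 < Rabs lam ->
  vanishes_locally_uniformly
    (fun n t => Rabs (weight_prod q (step_weight lam l) n (t - Z.of_nat n * q))).
Proof.
  intros Hq HL r eta He. assert (Hlam : lam <> 0) by (intros ->; rewrite Rabs_R0 in HL; lra).
  destruct (powerRZ_small _ _ HL He) as [E HE].
  set (d := Z.to_nat (Z.abs r + Z.abs l)).
  exists (2 * d + E)%nat. intros n Hn t Ht.
  rewrite Rabs_weight_prod_step by auto. apply HE.
  assert (Hd : (t - Z.of_nat n * q + Z.of_nat (n - d) * q <= l)%Z)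
    by (rewrite Nat2Z.inj_sub by lia; unfold d; nia).
  pose proof (step_exponent_le q l n (n - d) _ Hq ltac:(lia) Hd). lia.
Qed.

(* The slower weights of the numerator lose against the faster ones of the denominator. *)
Lemma step_cross_vanishes_slower qk lamk lk qi lami li :
  (0 < qi)%Z -> 1 <= Rabs lamk -> Rabs lamk < Rabs lami ->
  vanishes_locally_uniformly (fun n t =>
    Rabs (weight_prod qk (step_weight lamk lk) n (t + Z.of_nat n * (qi - qk)))
    / Rabs (weight_prod qi (step_weight lami li) n t)).
Proof.
  intros Hq HLk HLi r eta He. assert (HLi1 : 1 < Rabs lami) by lra.
  assert (Hlami : lami <> 0) by (intros ->; rewrite Rabs_R0 in HLi1; lra).
  set (Lk := Rabs lamk) in *. set (Li := Rabs lami) in *.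
  set (d := Z.to_nat (Z.abs r + Z.abs li)).
  set (C := powerRZ Li (2 * Z.of_nat d)).
  assert (HC : 0 < C) by (apply powerRZ_lt; lra).
  assert (Hratio : Rabs (Lk / Li) < 1).
  { rewrite Rabs_right by (apply Rle_ge, Rdiv_le_0_compat; lra).
    apply (Rmult_lt_reg_r Li); [lra|]. unfold Rdiv. rewrite Rmult_assoc, Rinv_l; lra. }
  destruct (pow_lt_1_zero _ Hratio (eta / C)) as [n0 Hn0]; [apply Rdiv_lt_0_compat; lra|].
  exists n0. intros n Hn t Ht.
  assert (Hden : / Rabs (weight_prod qi (step_weight lami li) n t) <= C * / Li ^ n).
  { eapply Rle_trans; [apply (Rabs_inv_weight_prod_step_le _ _ _ _ d); auto; unfold d; nia|].
    unfold C. rewrite pow_powerRZ, <- powerRZ_neg', <- powerRZ_add by lra. right. f_equal. }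
  pose proof (Rabs_weight_prod_le qk (step_weight lamk lk) Lk n (t + Z.of_nat n * (qi - qk))
    (fun k => Rabs_step_weight_le lamk lk k HLk)) as Hnum.
  specialize (Hn0 n Hn). rewrite Rabs_right in Hn0
    by (apply Rle_ge, pow_le, Rdiv_le_0_compat; lra).
  replace ((Lk / Li) ^ n) with (Lk ^ n * / Li ^ n) in Hn0
    by (unfold Rdiv; rewrite Rpow_mult_distr, pow_inv; auto).
  assert (0 < Li ^ n) by (apply pow_lt; lra).
  unfold Rdiv. eapply Rle_trans.
  { apply Rmult_le_compat; [apply Rabs_pos|left; apply Rinv_0_lt_compat, Rabs_pos_lt|exact Hnum|exact Hden].
    apply weight_prod_neq0. intros. apply step_weight_neq0. auto. }
  apply (Rmult_lt_compat_r C) in Hn0; [|lra].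
  replace (eta / C * C) with eta in Hn0 by (field; lra). lra.
Qed.

Lemma step_exponent_far_left qk qi l n t (E : nat) : (0 < qi)%Z -> (2 * qi < qk)%Z ->
  (2 * (Z.abs t + Z.abs l) + 2 * qk + qk * Z.of_nat E <= Z.of_nat n)%Z ->
  (step_exponent qk l n (t - Z.of_nat n * (qk - qi)) <= - Z.of_nat E)%Z.
Proof.
  intros Hqi Hqk Hn.
  set (x := (Z.of_nat n * qk - Z.of_nat n * qi + l - t)%Z).
  assert (HqE : (0 <= qk * Z.of_nat E)%Z) by nia.
  assert (Hnqi : (Z.of_nat n <= Z.of_nat n * qi)%Z) by nia.
  assert (Hnqk : (2 * (Z.of_nat n * qi) + Z.of_nat n <= Z.of_nat n * qk)%Z) by nia.
  assert (Hx : (0 <= x)%Z) by (unfold x; lia).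
  pose proof (Z.mul_div_le x qk ltac:(lia)) as Hle.
  pose proof (Z.mul_succ_div_gt x qk ltac:(lia)) as Hgt.
  pose proof (Z.div_pos x qk Hx ltac:(lia)) as Ha0.
  set (a := (x / qk)%Z) in *.
  assert (Han : (a <= Z.of_nat n)%Z).
  { apply (Z.mul_le_mono_pos_l _ _ qk); [lia|]. unfold x in Hle. lia. }
  assert (H2a : (Z.of_nat n + Z.of_nat E < 2 * a)%Z).
  { apply (Z.mul_lt_mono_pos_l qk); [lia|]. unfold x in Hgt. rewrite Z.mul_succ_r in Hgt. lia. }
  assert (Hpos : (t - Z.of_nat n * (qk - qi) + Z.of_nat (Z.to_nat a) * qk <= l)%Z).
  { rewrite Z2Nat.id by lia. unfold x in Hle. lia. }
  pose proof (step_exponent_le qk l n (Z.to_nat a) _ ltac:(lia) ltac:(lia) Hpos). lia.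
Qed.

(* For [2 qi < qk] the numerator is evaluated at [t - n (qk - qi)], so far to the left that
   more than half of the [n] weights involved are [1 / lamk]. *)
Lemma step_cross_vanishes_faster qk lamk lk qi lami li :
  (0 < qi)%Z -> (2 * qi < qk)%Z -> 1 < Rabs lamk -> 1 < Rabs lami ->
  vanishes_locally_uniformly (fun n t =>
    Rabs (weight_prod qk (step_weight lamk lk) n (t + Z.of_nat n * (qi - qk)))
    / Rabs (weight_prod qi (step_weight lami li) n t)).
Proof.
  intros Hqi Hqk HLk HLi r eta He.
  assert (Hlamk : lamk <> 0) by (intros ->; rewrite Rabs_R0 in HLk; lra).
  set (d := Z.to_nat (Z.abs r + Z.abs li)).
  set (C := powerRZ (Rabs lami) (2 * Z.of_nat d)).
  assert (HC : 0 < C) by (apply powerRZ_lt; lra).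
  destruct (powerRZ_small (Rabs lamk) (eta / C)) as [E HE]; [auto|apply Rdiv_lt_0_compat; lra|].
  exists (Z.to_nat (2 * (Z.abs r + Z.abs lk) + 2 * qk + qk * Z.of_nat E)). intros n Hn t Ht.
  assert (Hden : / Rabs (weight_prod qi (step_weight lami li) n t) <= C).
  { eapply Rle_trans; [apply (Rabs_inv_weight_prod_step_le _ _ _ _ d); auto; unfold d; nia|].
    apply powerRZ_le_mono; lia || lra. }
  assert (Hnum : Rabs (weight_prod qk (step_weight lamk lk) n (t + Z.of_nat n * (qi - qk)))
                 <= eta / C).
  { rewrite Rabs_weight_prod_step by auto. apply HE.
    replace (t + Z.of_nat n * (qi - qk))%Z with (t - Z.of_nat n * (qk - qi))%Z by ring.
    apply step_exponent_far_left; auto. assert (0 <= qk * Z.of_nat E)%Z by nia. lia. }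
  unfold Rdiv. eapply Rle_trans.
  { apply Rmult_le_compat; [apply Rabs_pos|left; apply Rinv_0_lt_compat, Rabs_pos_lt|exact Hnum|exact Hden].
    apply weight_prod_neq0. intros. apply step_weight_neq0. intros ->. rewrite Rabs_R0 in HLi. lra. }
  right. field. lra.
Qed.

(** * Disjoint hypercyclicity of weighted shifts *)

Section WeightedShifts.

Variables (p : R) (N : nat) (q : nat -> Z) (w : nat -> Z -> R) (Q : Z) (M : R).
Hypothesis p_ge1 : 1 <= p.
Hypothesis N_pos : (0 < N)%nat.
Hypothesis q_pos : forall i, (i < N)%nat -> (0 < q i)%Z.
Hypothesis q_le : forall i, (i < N)%nat -> (q i <= Q)%Z.
Hypothesis M_ge1 : 1 <= M.
Hypothesis w_le : forall i k, (i < N)%nat -> Rabs (w i k) <= M.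
Hypothesis w_neq0 : forall i k, (i < N)%nat -> w i k <> 0.

Let wp i := weight_prod (q i) (w i).

Hypothesis inv_vanishes : forall i, (i < N)%nat ->
  vanishes_locally_uniformly (fun n t => / Rabs (wp i n t)).
Hypothesis fwd_vanishes : forall k, (k < N)%nat ->
  vanishes_locally_uniformly (fun n t => Rabs (wp k n (t - Z.of_nat n * q k))).
Hypothesis cross_vanishes : forall i k, (i < N)%nat -> (k < N)%nat -> i <> k ->
  vanishes_locally_uniformly
    (fun n t => Rabs (wp k n (t + Z.of_nat n * (q i - q k))) / Rabs (wp i n t)).

Lemma wp_neq0 i n j : (i < N)%nat -> wp i n j <> 0.
Proof. intros Hi. apply weight_prod_neq0. auto. Qed.

Lemma inv_Rabs_wp_ge0 i n j : (i < N)%nat -> 0 <= / Rabs (wp i n j).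
Proof. intros Hi. left. apply Rinv_0_lt_compat, Rabs_pos_lt, wp_neq0. auto. Qed.

Lemma INR_N_pos : 0 < INR N.
Proof. apply lt_0_INR. auto. Qed.

Definition tolerance (m : nat) : R := / (INR (target_radius m) + 1).

Definition window_len (m : nat) : Z := (2 * Z.of_nat (target_radius m) + 2)%Z.

(* The pieces added at stage [m] are bounded by [piece_size m]; the factor [1 + radius_sum m]
   makes them negligible against every earlier tolerance. *)
Definition radius_sum (m : nat) : R := psum (fun i => INR (target_radius i)) (S m).

Definition piece_size (m : nat) : R :=
  (1/2) ^ (S m) / (IZR (window_len m) * INR N * (1 + radius_sum m)).

Definition core_radius (n : nat) : Z := (2 * Z.of_nat n * Q + 1)%Z.

Lemma core_radius_ge1 n : (1 <= core_radius n)%Z.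
Proof. unfold core_radius. pose proof (q_pos 0 N_pos). pose proof (q_le 0 N_pos). nia. Qed.

Lemma tolerance_pos m : 0 < tolerance m.
Proof. unfold tolerance. apply Rinv_0_lt_compat. pose proof (pos_INR (target_radius m)). lra. Qed.

Lemma window_len_pos m : 0 < IZR (window_len m).
Proof. apply IZR_lt. unfold window_len. lia. Qed.

Lemma radius_sum_ge0 m : 0 <= radius_sum m.
Proof. apply psum_ge0. intros. apply pos_INR. Qed.

Lemma piece_size_pos m : 0 < piece_size m.
Proof.
  unfold piece_size. pose proof (window_len_pos m). pose proof INR_N_pos. pose proof (radius_sum_ge0 m).
  apply Rdiv_lt_0_compat; [apply pow_lt; lra|]. apply Rmult_lt_0_compat; [apply Rmult_lt_0_compat|]; lra.
Qed.

Lemma piece_mass m : INR N * piece_size m * IZR (window_len m) = (1/2) ^ (S m) / (1 + radius_sum m).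
Proof.
  unfold piece_size. pose proof (window_len_pos m). pose proof INR_N_pos. pose proof (radius_sum_ge0 m).
  field. lra.
Qed.

Lemma piece_mass_le m : INR N * piece_size m * IZR (window_len m) <= (1/2) ^ (S m).
Proof.
  rewrite piece_mass. pose proof (radius_sum_ge0 m). pose proof (pow_lt (1/2) (S m) ltac:(lra)).
  unfold Rdiv. rewrite <- (Rmult_1_r ((1/2) ^ S m)) at 2. apply Rmult_le_compat_l; [lra|].
  rewrite <- Rinv_1. apply Rinv_le_contravar; lra.
Qed.

Lemma piece_mass_later m m' : (m < m')%nat ->
  INR N * piece_size m' * IZR (window_len m') <= (1/2) ^ (S m') * tolerance m.
Proof.
  intros H. rewrite piece_mass. unfold tolerance, Rdiv. pose proof (pos_INR (target_radius m)).
  apply Rmult_le_compat_l; [apply pow_le; lra|]. apply Rinv_le_contravar; [lra|].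
  assert (INR (target_radius m) <= radius_sum m')
    by (apply (psum_ge_term (fun i => INR (target_radius i))); [intros; apply pos_INR|lia]).
  lra.
Qed.

(* [n] is a good time for stage [m] when the previous stage used time [np]: the new pieces stay
   below [piece_size m] even after [np] more applications of a shift (third clause, which
   controls the later stages), the part of the vector built so far, which lives in
   [|j| <= core_radius np], is crushed by [T_k^n] (fourth clause), and the cross terms
   [T_k^n T_i^(-n) target] are small (last clause). *)
Definition good_time (m np n : nat) : Prop :=
  let K := (Z.of_nat (target_radius m) + 1)%Z in
  (np < n)%nat /\ (target_radius m + m + 1 <= n)%nat /\
  (forall i, (i < N)%nat -> forall t, (Z.abs t <= K)%Z ->
     target_bound m * M ^ np * / Rabs (wp i n t) <= piece_size m) /\
  (forall k, (k < N)%nat -> forall t, (Z.abs t <= core_radius np)%Z ->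
     Rabs (wp k n (t - Z.of_nat n * q k)) <= tolerance m / IZR (2 * core_radius np + 1)) /\
  (forall i, (i < N)%nat -> forall k, (k < N)%nat -> i <> k -> forall t, (Z.abs t <= K)%Z ->
     target_bound m * (Rabs (wp k n (t + Z.of_nat n * (q i - q k))) / Rabs (wp i n t))
     <= tolerance m / (INR N * IZR (window_len m))).

Lemma good_time_eventually m np : eventually (good_time m np).
Proof.
  pose proof (target_bound_ge0 m) as HB. pose proof (tolerance_pos m) as Htol.
  pose proof INR_N_pos as HN. pose proof (window_len_pos m) as Hlen.
  assert (HMnp : 0 <= M ^ np) by (apply pow_le; lra).
  repeat apply filter_and.
  - exists (S np). intros. lia.
  - exists (target_radius m + m + 1)%nat. auto.
  - apply eventually_forall_lt. intros i Hi.
    apply vanishes_mult; auto using inv_vanishes, piece_size_pos. nra.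
  - apply eventually_forall_lt. intros k Hk. apply fwd_vanishes; auto.
    apply Rdiv_lt_0_compat; auto. apply IZR_lt. pose proof (core_radius_ge1 np). lia.
  - apply eventually_forall_lt. intros i Hi. apply eventually_forall_lt. intros k Hk.
    destruct (Nat.eq_dec i k) as [<-|Hik]; [exists O; intros; contradiction|].
    eapply filter_imp; [intros n H _; exact H|].
    apply vanishes_mult; auto. apply Rdiv_lt_0_compat; nra.
Qed.

Definition next_time (m np : nat) : nat :=
  proj1_sig (constructive_indefinite_description _ (good_time_eventually m np)).

Lemma next_time_spec m np n : (next_time m np <= n)%nat -> good_time m np n.
Proof.
  unfold next_time. destruct (constructive_indefinite_description _ _) as [n0 H]. simpl. auto.
Qed.

Fixpoint time (m : nat) : nat :=
  match m with O => next_time O O | S m' => next_time (S m') (time m') end.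

Definition prev_time (m : nat) : nat := match m with O => O | S m' => time m' end.

Lemma time_good m : good_time m (prev_time m) (time m).
Proof. destruct m; apply next_time_spec, Nat.le_refl. Qed.

Lemma prev_time_lt m : (prev_time m < time m)%nat.
Proof. apply time_good. Qed.

Lemma time_ge m : (target_radius m + m + 1 <= time m)%nat.
Proof. apply time_good. Qed.

Lemma time_le_prev_time m m' : (m < m')%nat -> (time m <= prev_time m')%nat.
Proof.
  intros H. induction H as [|m' H IH]; [auto|].
  pose proof (prev_time_lt m'). simpl. lia.
Qed.

(* [piece m i] is [T_i^{-time m}] applied to [target m i]. *)
Definition piece (m i : nat) (j : Z) : R :=
  let t := (j - Z.of_nat (time m) * q i)%Z in target m i t / wp i (time m) t.

Lemma piece_out m i j :
  let t := (j - Z.of_nat (time m) * q i)%Z in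
  (t < - (Z.of_nat (target_radius m) + 1) \/ Z.of_nat (target_radius m) + 1 <= t)%Z ->
  piece m i j = 0.
Proof.
  intros t H. unfold piece. cbv zeta. fold t. rewrite target_out by lia.
  unfold Rdiv. apply Rmult_0_l.
Qed.

Lemma Rabs_mult_piece_le m i c j : (i < N)%nat -> Rabs c <= M ^ prev_time m ->
  Rabs (c * piece m i j) <= piece_size m.
Proof.
  intros Hi Hc. set (t := (j - Z.of_nat (time m) * q i)%Z).
  destruct (Z_le_gt_dec (Z.abs t) (Z.of_nat (target_radius m) + 1)) as [Ht|Ht].
  2: { rewrite piece_out by (simpl; lia). rewrite Rmult_0_r, Rabs_R0. left. apply piece_size_pos. }
  destruct (time_good m) as [_ [_ [Hgood _]]].
  eapply Rle_trans; [|apply (Hgood i Hi t ltac:(lia))].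
  unfold piece. cbv zeta. fold t. unfold Rdiv. rewrite !Rabs_mult, Rabs_inv.
  assert (Hct : Rabs c * Rabs (target m i t) <= M ^ prev_time m * target_bound m)
    by (apply Rmult_le_compat; auto using Rabs_pos, Rabs_target_le).
  rewrite <- Rmult_assoc, (Rmult_comm (target_bound m)).
  apply Rmult_le_compat_r; auto using inv_Rabs_wp_ge0.
Qed.

Lemma zsum_mult_piece_le m i c s n : (i < N)%nat -> (forall j, Rabs (c j) <= M ^ prev_time m) ->
  zsum (fun j => Rabs (c j * piece m i (j + s))) n <= piece_size m * IZR (window_len m).
Proof.
  intros Hi Hc.
  apply (zsum_le_supported _ (Z.of_nat (time m) * q i - Z.of_nat (target_radius m) - 1 - s)).
  - unfold window_len. lia.
  - left. apply piece_size_pos.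
  - intros. apply Rabs_pos.
  - intros j _. apply Rabs_mult_piece_le; auto.
  - intros j Hj. rewrite piece_out by (simpl; unfold window_len in Hj; lia).
    rewrite Rmult_0_r. apply Rabs_R0.
Qed.

Lemma piece_support m i j : (i < N)%nat -> piece m i j <> 0 ->
  (Z.of_nat m <= j <= 2 * Z.of_nat (time m) * Q)%Z.
Proof.
  intros Hi H. assert (Hin : ~ (j - Z.of_nat (time m) * q i < - (Z.of_nat (target_radius m) + 1)
    \/ Z.of_nat (target_radius m) + 1 <= j - Z.of_nat (time m) * q i)%Z)
    by (intros Hout; apply H, piece_out, Hout).
  pose proof (time_ge m). pose proof (q_pos i Hi). pose proof (q_le i Hi). nia.
Qed.

Definition partial_vector (A : nat) (j : Z) : R := psum (fun m => psum (fun i => piece m i j) N) A.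

(* Only the stages [m <= |j|] contribute at [j]. *)
Definition dhc_vector (j : Z) : R := partial_vector (S (Z.to_nat (Z.abs j))) j.

Lemma dhc_vector_partial A j : (Z.to_nat (Z.abs j) < A)%nat -> dhc_vector j = partial_vector A j.
Proof.
  intros H. unfold dhc_vector, partial_vector. symmetry. apply psum_stable; [lia|].
  intros m Hm. apply psum_0. intros i Hi.
  destruct (Req_dec (piece m i j) 0) as [E|E]; auto.
  apply piece_support in E; auto. lia.
Qed.

Lemma partial_vector_out m j : (core_radius (prev_time m) < Z.abs j)%Z -> partial_vector m j = 0.
Proof.
  intros H. apply psum_0. intros m' Hm'. apply psum_0. intros i Hi.
  destruct (Req_dec (piece m' i j) 0) as [E|E]; auto.
  apply piece_support in E; auto. pose proof (time_le_prev_time m' m Hm').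
  pose proof (q_pos i Hi). pose proof (q_le i Hi). unfold core_radius in H. nia.
Qed.

Lemma Rabs_partial_vector_le1 A j : Rabs (partial_vector A j) <= 1.
Proof.
  eapply Rle_trans; [apply Rabs_psum_le|].
  eapply Rle_trans; [|apply (psum_half_pow_le1 A)]. apply psum_le. intros m _.
  eapply Rle_trans; [apply Rabs_psum_le|].
  eapply Rle_trans; [|apply piece_mass_le].
  eapply Rle_trans; [apply (psum_le _ (fun _ => piece_size m))|].
  - intros i Hi. rewrite <- (Rmult_1_l (piece m i j)). apply Rabs_mult_piece_le; auto.
    rewrite Rabs_R1. apply pow_R1_Rle. auto.
  - rewrite psum_const. pose proof (piece_size_pos m). pose proof INR_N_pos.
    assert (1 <= IZR (window_len m)) by (apply IZR_le; unfold window_len; lia).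
    rewrite <- (Rmult_1_r (INR N * piece_size m)) at 1. apply Rmult_le_compat_l; nra.
Qed.

Lemma zsum_Rabs_dhc_vector_le1 n : zsum (fun j => Rabs (dhc_vector j)) n <= 1.
Proof.
  eapply Rle_trans.
  { apply (zsum_le _ (fun j => psum (fun m => psum (fun i => Rabs (1 * piece m i (j + 0))) N) (S n))).
    intros j Hj. rewrite (dhc_vector_partial (S n)) by lia. unfold partial_vector.
    eapply Rle_trans; [apply Rabs_psum_le|]. apply psum_le. intros m _.
    eapply Rle_trans; [apply Rabs_psum_le|]. apply psum_le. intros i _.
    rewrite Rmult_1_l, Z.add_0_r. lra. }
  rewrite zsum_psum_comm. eapply Rle_trans; [|apply (psum_half_pow_le1 (S n))].
  apply psum_le. intros m _. eapply Rle_trans; [|apply piece_mass_le].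
  rewrite zsum_psum_comm, Rmult_assoc, <- psum_const. apply psum_le. intros i Hi.
  apply zsum_mult_piece_le; auto. intros. rewrite Rabs_R1. apply pow_R1_Rle. auto.
Qed.

Lemma dhc_vector_in_lp : in_lp p dhc_vector.
Proof.
  apply (in_lp_zsum_bounded _ _ 1). intros n.
  eapply Rle_trans; [|apply (zsum_Rabs_dhc_vector_le1 n)]. apply zsum_le. intros j _.
  apply abspow_le_Rabs; auto. rewrite (dhc_vector_partial (S (Z.to_nat (Z.abs j)))) by lia.
  apply Rabs_partial_vector_le1.
Qed.

Lemma zsum_earlier_le m k n : (k < N)%nat ->
  zsum (fun j => Rabs (wp k (time m) j)
                 * Rabs (partial_vector m (j + Z.of_nat (time m) * q k))) n <= tolerance m.
Proof.
  intros Hk. set (s := (Z.of_nat (time m) * q k)%Z). set (V := core_radius (prev_time m)).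
  pose proof (core_radius_ge1 (prev_time m)) as HV. fold V in HV.
  assert (HV' : 0 < IZR (2 * V + 1)) by (apply IZR_lt; lia).
  replace (tolerance m) with (tolerance m / IZR (2 * V + 1) * IZR (2 * V + 1)) by (field; lra).
  pose proof (tolerance_pos m).
  apply (zsum_le_supported _ (- V - s)); [lia|apply Rlt_le, Rdiv_lt_0_compat; auto| |intros j Hj..].
  - intros. apply Rmult_le_pos; apply Rabs_pos.
  - destruct (time_good m) as [_ [_ [_ [Hfwd _]]]].
    specialize (Hfwd k Hk (j + s)%Z ltac:(fold V; lia)).
    replace (j + s - Z.of_nat (time m) * q k)%Z with j in Hfwd by (unfold s; lia). fold V in Hfwd.
    pose proof (Rabs_partial_vector_le1 m (j + s)).
    pose proof (Rabs_pos (wp k (time m) j)). pose proof (Rabs_pos (partial_vector m (j + s))). nra.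
  - rewrite partial_vector_out by (fold V; lia). rewrite Rabs_R0, Rmult_0_r. auto.
Qed.

Lemma Rabs_cross_term_le m i k j : (i < N)%nat -> (k < N)%nat -> i <> k ->
  Rabs (wp k (time m) j * piece m i (j + Z.of_nat (time m) * q k))
  <= tolerance m / (INR N * IZR (window_len m)).
Proof.
  intros Hi Hk Hik. set (n := time m).
  set (t := (j + Z.of_nat n * q k - Z.of_nat n * q i)%Z).
  assert (Hpos : 0 <= tolerance m / (INR N * IZR (window_len m))).
  { pose proof (tolerance_pos m). pose proof INR_N_pos. pose proof (window_len_pos m).
    left. apply Rdiv_lt_0_compat; nra. }
  destruct (Z_le_gt_dec (Z.abs t) (Z.of_nat (target_radius m) + 1)) as [Ht|Ht].
  2: { rewrite piece_out by (simpl; fold n; fold t; lia). rewrite Rmult_0_r, Rabs_R0. auto. }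
  destruct (time_good m) as [_ [_ [_ [_ Hcross]]]].
  eapply Rle_trans; [|apply (Hcross i Hi k Hk Hik t Ht)]. fold n.
  replace (t + Z.of_nat n * (q i - q k))%Z with j by (unfold t; lia).
  unfold piece. cbv zeta. fold n. fold t. unfold Rdiv. rewrite !Rabs_mult, Rabs_inv.
  pose proof (Rabs_target_le m i t). pose proof (inv_Rabs_wp_ge0 i n t Hi).
  pose proof (Rabs_pos (wp k n j)). pose proof (Rabs_pos (target m i t)).
  replace (Rabs (wp k n j) * (Rabs (target m i t) * / Rabs (wp i n t)))
    with (Rabs (target m i t) * (Rabs (wp k n j) * / Rabs (wp i n t))) by ring.
  apply Rmult_le_compat_r; auto. apply Rmult_le_pos; auto.
Qed.

Lemma zsum_cross_le m k n : (k < N)%nat ->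
  zsum (fun j => psum (fun i => if Nat.eqb i k then 0 else
          Rabs (wp k (time m) j * piece m i (j + Z.of_nat (time m) * q k))) N) n
  <= tolerance m.
Proof.
  intros Hk. rewrite zsum_psum_comm.
  pose proof (tolerance_pos m). pose proof INR_N_pos. pose proof (window_len_pos m).
  eapply Rle_trans; [apply (psum_le _ (fun _ => tolerance m / INR N))|].
  2: { rewrite psum_const. right. field. lra. }
  intros i Hi. destruct (Nat.eqb_spec i k) as [->|Hik].
  { unfold zsum. rewrite psum_0; [apply Rlt_le, Rdiv_lt_0_compat; auto|].
    intros. unfold zfold. lra. }
  replace (tolerance m / INR N)
    with (tolerance m / (INR N * IZR (window_len m)) * IZR (window_len m)) by (field; lra).
  apply (zsum_le_supported _ (Z.of_nat (time m) * (q i - q k) - Z.of_nat (target_radius m) - 1)).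
  - unfold window_len. lia.
  - left. apply Rdiv_lt_0_compat; nra.
  - intros. apply Rabs_pos.
  - intros j _. apply Rabs_cross_term_le; auto.
  - intros j Hj. rewrite piece_out by (simpl; unfold window_len in Hj; lia).
    rewrite Rmult_0_r. apply Rabs_R0.
Qed.

Lemma zsum_later_le m k r n : (k < N)%nat ->
  zsum (fun j => psum (fun r' => psum (fun i =>
          Rabs (wp k (time m) j * piece (S m + r') i (j + Z.of_nat (time m) * q k))) N) r) n
  <= tolerance m.
Proof.
  intros Hk. rewrite zsum_psum_comm. pose proof (tolerance_pos m).
  eapply Rle_trans; [apply (psum_le _ (fun r' => tolerance m * (1/2) ^ (S r')))|].
  2: { rewrite psum_scal. pose proof (psum_half_pow_le1 r). nra. }
  intros r' _. set (m' := (S m + r')%nat). rewrite zsum_psum_comm.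
  eapply Rle_trans; [apply (psum_le _ (fun _ => piece_size m' * IZR (window_len m')))|].
  - intros i Hi. apply zsum_mult_piece_le; auto. intros j.
    eapply Rle_trans; [apply (Rabs_weight_prod_le _ _ M); intros; apply w_le; auto|].
    apply Rle_pow; auto. apply time_le_prev_time. unfold m'. lia.
  - rewrite psum_const, <- Rmult_assoc.
    eapply Rle_trans; [apply (piece_mass_later m); unfold m'; lia|].
    rewrite Rmult_comm. apply Rmult_le_compat_l; [lra|].
    unfold m'. replace (S (S m + r')) with (S r' + S m)%nat by lia. rewrite pow_add.
    pose proof (pow_le (1/2) (S r') ltac:(lra)).
    assert ((1/2) ^ S m <= 1) by (apply Rlt_le, pow_lt_1_compat; lra || lia). nra.
Qed.

Lemma Rabs_iter_sub_target_le m k j r : (k < N)%nat ->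
  let s := (Z.of_nat (time m) * q k)%Z in
  (Z.to_nat (Z.abs (j + s)) < S m + r)%nat ->
  Rabs (Nat.iter (time m) (pseudo_shift (shift_map (q k)) (w k)) dhc_vector j - target m k j)
  <= Rabs (wp k (time m) j) * Rabs (partial_vector m (j + s))
     + psum (fun i => if Nat.eqb i k then 0 else Rabs (wp k (time m) j * piece m i (j + s))) N
     + psum (fun r' => psum (fun i => Rabs (wp k (time m) j * piece (S m + r') i (j + s))) N) r.
Proof.
  intros Hk s Hj. set (c := wp k (time m) j).
  rewrite iter_pseudo_shift. fold s. fold (wp k). fold c.
  rewrite (dhc_vector_partial (S m + r)) by auto. unfold partial_vector. rewrite psum_add.
  cbn [psum]. set (stage := fun m' => psum (fun i => piece m' i (j + s)) N).
  assert (Hstage : c * stage m - target m k j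
                   = psum (fun i => if Nat.eqb i k then 0 else c * piece m i (j + s)) N).
  { rewrite <- (psum_delta (target m k j) k N Hk). unfold stage.
    rewrite <- psum_scal, <- psum_minus. apply psum_ext. intros i _.
    destruct (Nat.eqb_spec i k) as [->|]; [|lra].
    unfold piece. cbv zeta. replace (j + s - Z.of_nat (time m) * q k)%Z with j by (unfold s; lia).
    fold c. field. apply wp_neq0. auto. }
  change (psum (fun i => piece m i (j + s)) N) with (stage m).
  change (psum (fun r' => psum (fun i => piece (S m + r') i (j + s)) N) r)
    with (psum (fun r' => stage (S m + r')%nat) r).
  replace (c * (psum stage m + stage m + psum (fun r' => stage (S m + r')%nat) r) - target m k j)
    with (c * psum stage m + (c * stage m - target m k j) + c * psum (fun r' => stage (S m + r')%nat) r)
    by ring.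
  rewrite Hstage. fold (partial_vector m (j + s)).
  eapply Rle_trans; [apply Rabs_triang|]. apply Rplus_le_compat.
  - eapply Rle_trans; [apply Rabs_triang|]. rewrite Rabs_mult. apply Rplus_le_compat_l.
    eapply Rle_trans; [apply Rabs_psum_le|]. apply psum_le. intros i _.
    destruct (Nat.eqb i k); [rewrite Rabs_R0|]; lra.
  - rewrite <- psum_scal. eapply Rle_trans; [apply Rabs_psum_le|]. apply psum_le. intros r' _.
    unfold stage. rewrite <- psum_scal. apply Rabs_psum_le.
Qed.

Lemma zsum_iter_sub_target_le m k n : (k < N)%nat ->
  zsum (fun j => Rabs (Nat.iter (time m) (pseudo_shift (shift_map (q k)) (w k)) dhc_vector j
                       - target m k j)) n
  <= 3 * tolerance m.
Proof.
  intros Hk. set (s := (Z.of_nat (time m) * q k)%Z).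
  set (r := S (Z.to_nat (Z.of_nat n + s))).
  eapply Rle_trans.
  { apply zsum_le. intros j Hj. apply (Rabs_iter_sub_target_le m k j r Hk).
    pose proof (q_pos k Hk). unfold r, s. nia. }
  rewrite !zsum_plus.
  pose proof (zsum_earlier_le m k n Hk). pose proof (zsum_cross_le m k n Hk).
  pose proof (zsum_later_le m k r n Hk). lra.
Qed.

Theorem weighted_shifts_disjoint_hypercyclic :
  disjoint_hypercyclic p N (fun i => pseudo_shift (shift_map (q i)) (w i)).
Proof.
  exists dhc_vector. split; [apply dhc_vector_in_lp|]. intros y Hy eps Heps.
  pose proof (exp_pos (p * ln 2)) as H2p. pose proof (exp_pos (p * ln eps)) as Hep.
  fold (Rpower 2 p) in H2p. fold (Rpower eps p) in Hep.
  set (eta := Rmin (1/3) (Rpower eps p / (8 * Rpower 2 p))).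
  assert (Heta : 0 < eta) by (apply Rmin_pos; [|apply Rdiv_lt_0_compat]; lra).
  assert (Heta1 : eta <= 1/3) by apply Rmin_l.
  assert (Heta2 : eta <= Rpower eps p / (8 * Rpower 2 p)) by apply Rmin_r.
  destruct (targets_dense p N y eta p_ge1 Hy Heta) as [m [Htol Hclose]].
  exists (time m). intros i Hi.
  apply (lp_norm_zsub_lt p _ (target m i) _ eps (3 * eta) eta); auto; [|lra|].
  - intros n. pose proof (zsum_iter_sub_target_le m i n Hi). unfold tolerance in *. lra.
  - apply (Rmult_le_compat_l (4 * Rpower 2 p)) in Heta2; [|lra].
    replace (4 * Rpower 2 p * (Rpower eps p / (8 * Rpower 2 p))) with (Rpower eps p / 2)
      in Heta2 by (field; lra). lra.
Qed.

End WeightedShifts.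

Lemma Rabs_gt1_of_increasing N (lam : nat -> R) : (2 <= N)%nat ->
  (forall s t, (s < t)%nat -> (t < N)%nat -> 1 < Rabs (lam s) /\ Rabs (lam s) < Rabs (lam t)) ->
  forall i, (i < N)%nat -> 1 < Rabs (lam i).
Proof.
  intros HN HL i Hi. destruct (Nat.eq_dec i 0) as [->|].
  - apply (HL 0%nat (N - 1)%nat); lia.
  - destruct (HL 0%nat i); lia || lra.
Qed.

Lemma step_shifts_disjoint_hypercyclic p N q l lam : 1 <= p -> (2 <= N)%nat ->
  (forall i, (i < N)%nat -> (0 < q i)%Z) ->
  (forall s t, (s < t)%nat -> (t < N)%nat -> (2 * q s < q t)%Z) ->
  (forall s t, (s < t)%nat -> (t < N)%nat -> 1 < Rabs (lam s) /\ Rabs (lam s) < Rabs (lam t)) ->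
  disjoint_hypercyclic p N (fun i => pseudo_shift (shift_map (q i)) (step_weight (lam i) (l i))).
Proof.
  intros Hp HN Hq Hqq HL.
  assert (Hlast : forall i, (i < N)%nat -> (q i <= q (N - 1)%nat)%Z /\ Rabs (lam i) <= Rabs (lam (N - 1)%nat)).
  { intros i Hi. destruct (Nat.eq_dec i (N - 1)%nat) as [->|]; [split; [lia|lra]|].
    pose proof (Hq i Hi). pose proof (Hqq i (N - 1)%nat ltac:(lia) ltac:(lia)).
    pose proof (HL i (N - 1)%nat ltac:(lia) ltac:(lia)). split; [lia|lra]. }
  pose proof (Rabs_gt1_of_increasing N lam HN HL) as Hgt1.
  apply (weighted_shifts_disjoint_hypercyclic _ _ _ _ (q (N - 1)%nat) (Rabs (lam (N - 1)%nat))); auto.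
  - lia.
  - intros i Hi. apply Hlast. auto.
  - apply Rlt_le, Hgt1. lia.
  - intros i k Hi. eapply Rle_trans; [apply Rabs_step_weight_le|apply Hlast]; auto.
    apply Rlt_le, Hgt1. auto.
  - intros i k Hi. apply step_weight_neq0. intros E. specialize (Hgt1 i Hi). rewrite E, Rabs_R0 in Hgt1. lra.
  - intros i Hi. apply step_inv_vanishes; auto.
  - intros k Hk. apply step_fwd_vanishes; auto.
  - intros i k Hi Hk Hik. destruct (proj1 (Nat.lt_gt_cases i k) Hik) as [Hlt|Hgt].
    + apply step_cross_vanishes_faster; auto.
    + apply step_cross_vanishes_slower; auto. apply Rlt_le, Hgt1. auto. apply HL; auto.
Qed.

Lemma step_shift_inverse p q lam l : 1 <= p -> 1 < Rabs lam ->
  inverse_op p (pseudo_shift (shift_map q) (step_weight lam l))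
    (pseudo_shift (shift_map (- q)) (fun n => / step_weight lam l (n + q))).
Proof.
  intros Hp Hlam. apply (pseudo_shift_inverse _ _ _ (Rabs lam)); [auto|lra|intros k..].
  - apply step_weight_neq0. intros E. rewrite E, Rabs_R0 in Hlam. lra.
  - apply Rabs_step_weight_le. lra.
  - apply Rabs_inv_step_weight_le. lra.
Qed.

Lemma step_shift_inverse_zreflect q lam l x :
  pseudo_shift (shift_map (- q)) (fun n => / step_weight lam l (n + q)) x
  = zreflect (pseudo_shift (shift_map q) (step_weight lam (q - 2 - l)) (zreflect x)).
Proof.
  rewrite zreflect_pseudo_shift. f_equal. apply functional_extensionality. intros n.
  apply inv_step_weight_shift.
Qed.

(* indices 1..N of the paper are 0..N-1 here *)
Theorem theorem2p5 (p : R) (N : nat) (q : nat -> Z) (l : nat -> Z)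
  (lam : nat -> R) :
  1 <= p -> (2 <= N)%nat ->
  (forall i, (i < N)%nat -> (0 < q i)%Z) ->
  (forall s t, (s < t)%nat -> (t < N)%nat -> (2 * q s < q t)%Z) ->
  (forall s t, (s < t)%nat -> (t < N)%nat ->
     1 < Rabs (lam s) /\ Rabs (lam s) < Rabs (lam t)) ->
  let T := fun i => pseudo_shift (shift_map (q i)) (step_weight (lam i) (l i)) in
  exists S : nat -> zseq -> zseq,
    (forall i, (i < N)%nat -> inverse_op p (T i) (S i)) /\
    disjoint_hypercyclic p N T /\
    disjoint_hypercyclic p N S.
Proof.
  intros Hp HN Hq Hqq HL T.
  set (S := fun i => pseudo_shift (shift_map (- q i)) (fun n => / step_weight (lam i) (l i) (n + q i))).
  exists S. split; [|split].
  - intros i Hi. apply step_shift_inverse; auto. apply (Rabs_gt1_of_increasing N); auto.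
  - apply step_shifts_disjoint_hypercyclic; auto.
  - replace S with (fun i x => zreflect (pseudo_shift (shift_map (q i))
                                 (step_weight (lam i) (q i - 2 - l i)) (zreflect x)))
      by (unfold S; do 2 (apply functional_extensionality; intros);
          symmetry; apply step_shift_inverse_zreflect).
    apply (disjoint_hypercyclic_zreflect p N
      (fun i => pseudo_shift (shift_map (q i)) (step_weight (lam i) (q i - 2 - l i)))).
    apply step_shifts_disjoint_hypercyclic; auto.
Qed.
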